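(* For any budget $\Lambda\ge1$, the total cost of all evaluations performed by the Kometo algorithm (described in the context) does not exceed $\Lambda$.
   Context: Setting: $\mathcal{X}$ is a set with a hierarchical partitioning $\mathcal{P}=(\mathcal{P}_{h,i})_{h\ge0,0\le i\le K^h-1}$, $K\ge2$: $\mathcal{P}_{0,0}=\mathcal{X}$ and the $K$ children $\mathcal{P}_{h+1,Ki+l}$ ($0\le l\le K-1$) of $\mathcal{P}_{h,i}$ partition it. Each cell has a fixed representative $x_{h,i}\in\mathcal{P}_{h,i}$. Fidelities $Z=[0,1]$, functions $f_z:\mathcal{X}\to\mathbb{R}$, a known cost function $\lambda:Z\to[0,+\infty]$, and for each $c\ge1$ an available fidelity $z_c$ with $\lambda(z_c)\le c$; evaluating $f_z(x)$ costs $\lambda(z)$. $\log$ is the natural logarithm. Kometo (input $\mathcal{P}$, $\Lambda$, $\lambda$, oracle access to the $f_z$): set $\tilde\Lambda=\left\lfloor\frac{(e-1)\Lambda}{2Ke(\log\Lambda+1)^2}\right\rfloor$ and $j_{\max}=\lfloor\log\tilde\Lambda\rfloor$. ''Fidelity level $j$'' (integer $j\ge0$) means fidelity $z_{e^j}$. For each cell $(h,i)$ and level $j$ the algorithm keeps a flag $T_{h,i,j}\in\{0,1\}$ (initially $0$) and, when $T_{h,i,j}=1$, the value $f_{h,i,j}=f_{z_{e^j}}(x_{h,i})$. Opening a cell $\mathcal{P}_{h,i}$ at fidelity level $j$ means: for each child $\mathcal{P}_{h+1,i'}$ and each $0\le u\le j$, set $T_{h+1,i',u}=1$, so that $f_{h+1,i',u}=f_{z_{e^u}}(x_{h+1,i'})$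 is evaluated (each (cell, level) value is evaluated at most once). Steps: (1) open the root $\mathcal{P}_{0,0}$ with budget $\tilde\Lambda$ (i.e. at fidelity level $j_{\max}$); (2) exploration: for $h=1,\dots,\lfloor\tilde\Lambda\rfloor$, for $m=1,\dots,\lfloor\tilde\Lambda/h\rfloor$: let $j=\lfloor\log\frac{\tilde\Lambda}{hm}\rfloor$ and open at fidelity level $j$ the not-yet-opened depth-$h$ cell $\mathcal{P}_{h,i}$ with $T_{h,i,j}=1$ having the highest value $f_{h,i,j}$; (3) cross-validation: for $j=0,\dots,j_{\max}$, let $x^c_j$ be the representative $x_{h,i}$ of a cell maximizing $f_{h,i,j}$ over all $(h,i)$ with $T_{h,i,j}=1$, and evaluate $f_{z_{\tilde\Lambda}}(x^c_j)$ (cost at most $\tilde\Lambda$); (4) output $x_\Lambda=\arg\max_{j\in\{0,\dots,j_{\max}\}}f_{z_{\tilde\Lambda}}(x^c_j)$. *)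

From Stdlib Require Import Reals ZArith List.
From Coquelicot Require Import Rbar.
Import ListNotations.
Open Scope R_scope.

(* pt      : the set X
   K       : branching factor
   cell h i: the cell P_{h,i} (as a predicate on X)
   rep h i : the representative x_{h,i}
   fz z x  : f_z(x)           (fidelities z in Z = [0,1])
   lam z   : cost lambda(z) in [0,+oo]
   zc c    : the available fidelity z_c (for c >= 1) *)
Record setting := Setting {
  pt : Type;
  K : nat;
  cell : nat -> nat -> pt -> Prop;
  rep : nat -> nat -> pt;
  fz : R -> pt -> R;
  lam : R -> Rbar;
  zc : R -> R }.

Definition valid (St : setting) : Prop :=
  (2 <= K St)%nat /\
  (forall x, cell St 0 0 x) /\
  (forall h i x, (i < K St ^ h)%nat ->
     (cell St h i x <-> exists l, (l < K St)%nat /\ cell St (S h) (K St * i + l) x)) /\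
  (forall h i l l' x, (i < K St ^ h)%nat -> (l < K St)%nat -> (l' < K St)%nat ->
     cell St (S h) (K St * i + l) x -> cell St (S h) (K St * i + l') x -> l = l') /\
  (forall h i, (i < K St ^ h)%nat -> cell St h i (rep St h i)) /\
  (forall z, 0 <= z <= 1 -> Rbar_le (Finite 0) (lam St z)) /\
  (forall c, 1 <= c -> 0 <= zc St c <= 1 /\ Rbar_le (lam St (zc St c)) (Finite c)).

Definition Ltilde (K : nat) (Lam : R) : Z :=
  Int_part ((exp 1 - 1) * Lam / (2 * INR K * exp 1 * (ln Lam + 1) ^ 2)).

(* j_max = floor (log Ltilde); when Ltilde = 0 (log undefined) there is no
   fidelity level at all, encoded as j_max = -1. *)
Definition jmax (K : nat) (Lam : R) : Z :=
  if Z.leb 1 (Ltilde K Lam) then Int_part (ln (IZR (Ltilde K Lam))) else (-1)%Z.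

Definition nlevels (K : nat) (Lam : R) : nat := Z.to_nat (jmax K Lam + 1).

Definition zlev (St : setting) (u : nat) : R := zc St (exp (INR u)).

Definition fval (St : setting) (h i u : nat) : R := fz St (zlev St u) (rep St h i).

Record state (X : Type) := State {
  Tflag : nat -> nat -> nat -> bool;
  opened : nat -> nat -> bool;
  calls : list (R * X) }.                (* trace of oracle calls (fidelity, point) *)
Arguments State {X}.
Arguments Tflag {X}.
Arguments opened {X}.
Arguments calls {X}.

Definition init_state (X : Type) : state X :=
  State (fun _ _ _ => false) (fun _ _ => false) [].

Definition eval_cell (St : setting) (st : state (pt St)) (h i u : nat) : state (pt St) :=
  if Tflag st h i u then st
  else State (fun h' i' u' => orb (Nat.eqb h' h && Nat.eqb i' i && Nat.eqb u' u)%bool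
                                  (Tflag st h' i' u'))
             (opened st)
             (calls st ++ [(zlev St u, rep St h i)]).

(* open cell (h,i) with levels 0..nlev-1 (i.e. at fidelity level j = nlev-1) *)
Definition open_cell (St : setting) (st : state (pt St)) (h i nlev : nat) : state (pt St) :=
  let st0 := State (Tflag st)
                   (fun h' i' => orb (Nat.eqb h' h && Nat.eqb i' i)%bool (opened st h' i'))
                   (calls st) in
  fold_left (fun s p => eval_cell St s (S h) (K St * i + fst p) (snd p))
            (list_prod (seq 0 (K St)) (seq 0 nlev)) st0.

Definition schedule (K : nat) (Lam : R) : list (nat * nat) :=
  let L := Z.to_nat (Ltilde K Lam) in
  flat_map (fun h => map (fun m => (h, m))
                          (seq 1 (Z.to_nat (Int_part (INR L / INR h)))))
           (seq 1 L).

Definition explevel (K : nat) (Lam : R) (h m : nat) : nat :=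
  Z.to_nat (Int_part (ln (IZR (Ltilde K Lam) / (INR h * INR m)))).

Inductive explore_step (St : setting) (Lam : R) (st : state (pt St)) :
    nat -> nat -> state (pt St) -> Prop :=
| es_open h m i :
    (i < K St ^ h)%nat ->
    opened st h i = false ->
    Tflag st h i (explevel (K St) Lam h m) = true ->
    (forall i', (i' < K St ^ h)%nat -> opened st h i' = false ->
       Tflag st h i' (explevel (K St) Lam h m) = true ->
       fval St h i' (explevel (K St) Lam h m) <= fval St h i (explevel (K St) Lam h m)) ->
    explore_step St Lam st h m
      (open_cell St st h i (S (explevel (K St) Lam h m)))
| es_skip h m :
    (forall i, (i < K St ^ h)%nat -> opened st h i = false ->
       Tflag st h i (explevel (K St) Lam h m) = false) ->
    explore_step St Lam st h m st.

Inductive explore_run (St : setting) (Lam : R) :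
    state (pt St) -> list (nat * nat) -> state (pt St) -> Prop :=
| er_nil st : explore_run St Lam st [] st
| er_cons st h m rest st' st'' :
    explore_step St Lam st h m st' ->
    explore_run St Lam st' rest st'' ->
    explore_run St Lam st ((h, m) :: rest) st''.

Inductive crossval (St : setting) (Lam : R) (st : state (pt St)) :
    list nat -> list (R * pt St) -> Prop :=
| cv_nil : crossval St Lam st [] []
| cv_cons j js h i rest :
    (i < K St ^ h)%nat ->
    Tflag st h i j = true ->
    (forall h' i', (i' < K St ^ h')%nat -> Tflag st h' i' j = true ->
       fval St h' i' j <= fval St h i j) ->
    crossval St Lam st js rest ->
    crossval St Lam st (j :: js)
      ((zc St (IZR (Ltilde (K St) Lam)), rep St h i) :: rest).

Definition kometo_run (St : setting) (Lam : R) (tr : list (R * pt St)) : Prop :=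
  exists st1 st2 cv,
    st1 = open_cell St (init_state (pt St)) 0 0 (nlevels (K St) Lam) /\
    explore_run St Lam st1 (schedule (K St) Lam) st2 /\
    crossval St Lam st2 (seq 0 (nlevels (K St) Lam)) cv /\
    tr = calls st2 ++ cv.

Definition total_cost (St : setting) (tr : list (R * pt St)) : Rbar :=
  fold_right (fun c acc => Rbar_plus (lam St (fst c)) acc) (Finite 0) tr.

From Stdlib Require Import Reals Lra Lia List ZArith.
From Coquelicot Require Import Rbar Rcomplements.
Import ListNotations.
Open Scope R_scope.

(* An evaluation at fidelity level u costs at most e^u, so opening a cell at
   level j (evaluating its K children at levels 0..j) costs at most
   K (e^(j+1) - 1) / (e - 1).  Write L for Ltilde and c = K e / (e - 1).
   The root is opened at level j_max with e^(j_max+1) <= e L, costing at most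
   c L.  Exploration step (h, m) uses a level j with e^(j+1) <= e L / (h m), so
   the whole exploration costs at most c L H_L^2 <= c L (1 + ln L)^2, H_L being
   the harmonic number.  Cross-validation makes j_max + 1 <= 1 + ln L calls of
   cost at most L.  The definition of L gives 2 (1 + ln Lam)^2 c L <= Lam, which
   also forces ln Lam >= 1 once L >= 1; with 1 + ln L <= 1 + ln Lam the three
   costs then add up to at most Lam.  When L = 0 nothing is evaluated. *)

Definition sumR {A} (f : A -> R) (l : list A) : R :=
  fold_right (fun x acc => f x + acc) 0 l.

Lemma sumR_app {A} (f : A -> R) l1 l2 : sumR f (l1 ++ l2) = sumR f l1 + sumR f l2.
Proof. induction l1 as [|x l1 IH]; simpl; [lra|]. unfold sumR in *; simpl; lra. Qed.

Lemma sumR_map {A B} (f : B -> R) (g : A -> B) l :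
  sumR f (map g l) = sumR (fun x => f (g x)) l.
Proof. induction l as [|x l IH]; simpl; auto. unfold sumR in *; simpl; lra. Qed.

Lemma sumR_flat_map {A B} (f : B -> R) (g : A -> list B) l :
  sumR f (flat_map g l) = sumR (fun x => sumR f (g x)) l.
Proof. induction l as [|x l IH]; simpl; auto. rewrite sumR_app, IH. reflexivity. Qed.

Lemma sumR_le {A} (f g : A -> R) l :
  (forall x, In x l -> f x <= g x) -> sumR f l <= sumR g l.
Proof.
  induction l as [|x l IH]; intros Hfg; unfold sumR in *; simpl; [lra|].
  assert (f x <= g x) by (apply Hfg; left; reflexivity).
  assert (fold_right (fun y acc => f y + acc) 0 l <= fold_right (fun y acc => g y + acc) 0 l)
    by (apply IH; intros; apply Hfg; right; assumption).
  lra.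
Qed.

Lemma sumR_scal {A} (f : A -> R) c l : sumR (fun x => c * f x) l = c * sumR f l.
Proof. induction l as [|x l IH]; unfold sumR in *; simpl; [lra|]. rewrite IH; lra. Qed.

Lemma sumR_nonneg {A} (f : A -> R) l : (forall x, In x l -> 0 <= f x) -> 0 <= sumR f l.
Proof.
  induction l as [|x l IH]; intros Hf; unfold sumR in *; simpl; [lra|].
  assert (0 <= f x) by (apply Hf; left; reflexivity).
  assert (0 <= fold_right (fun y acc => f y + acc) 0 l)
    by (apply IH; intros; apply Hf; right; assumption).
  lra.
Qed.

Lemma sumR_list_prod_snd {A B} (f : B -> R) (l1 : list A) (l2 : list B) :
  sumR (fun p => f (snd p)) (list_prod l1 l2) = INR (length l1) * sumR f l2.
Proof.
  induction l1 as [|x l1 IH]; [unfold sumR; simpl; ring|].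
  cbn [list_prod length]. rewrite sumR_app, sumR_map, IH, S_INR.
  change (sumR (fun y => f (snd (x, y))) l2) with (sumR f l2). ring.
Qed.

Lemma exp_1_gt_2 : 2 < exp 1.
Proof. pose proof (exp_ineq1 1 ltac:(lra)). lra. Qed.

Lemma sumR_exp_seq n : sumR (fun u => exp (INR u)) (seq 0 n) = (exp (INR n) - 1) / (exp 1 - 1).
Proof.
  pose proof exp_1_gt_2.
  induction n as [|n IH].
  - unfold sumR; simpl. rewrite exp_0. field. lra.
  - rewrite seq_S, sumR_app, IH, S_INR, exp_plus. unfold sumR at 1; simpl. field. lra.
Qed.

Lemma ln_le_sub_1 x : 0 < x -> ln x <= x - 1.
Proof. intros Hx. pose proof (exp_ineq1_le (ln x)) as H. rewrite exp_ln in H; lra. Qed.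

Lemma ln_nonneg x : 1 <= x -> 0 <= ln x.
Proof. intros Hx. rewrite <- ln_1. apply ln_le; lra. Qed.

Lemma exp_le_of_le_ln x y : 0 < y -> x <= ln y -> exp x <= y.
Proof.
  intros Hy Hx. rewrite <- (exp_ln y Hy).
  destruct (Rle_lt_or_eq_dec _ _ Hx) as [Hlt | ->]; [apply Rlt_le, exp_increasing, Hlt | lra].
Qed.

Definition harmonic (n : nat) : R := sumR (fun m => / INR m) (seq 1 n).

Lemma harmonic_nonneg n : 0 <= harmonic n.
Proof.
  apply sumR_nonneg. intros m Hm. apply in_seq in Hm.
  apply Rlt_le, Rinv_0_lt_compat, lt_0_INR. lia.
Qed.

Lemma harmonic_le_mono m n : (m <= n)%nat -> harmonic m <= harmonic n.
Proof.
  intros Hmn. unfold harmonic. replace n with (m + (n - m))%nat by lia.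
  rewrite seq_app, sumR_app.
  assert (0 <= sumR (fun k => / INR k) (seq (1 + m) (n - m))).
  { apply sumR_nonneg. intros k Hk. apply in_seq in Hk.
    apply Rlt_le, Rinv_0_lt_compat, lt_0_INR. lia. }
  lra.
Qed.

Lemma harmonic_le_1_ln n : (1 <= n)%nat -> harmonic n <= 1 + ln (INR n).
Proof.
  induction 1 as [|n Hn IH].
  - unfold harmonic, sumR; simpl. rewrite ln_1. lra.
  - unfold harmonic in *. rewrite seq_S, sumR_app.
    change (sumR (fun m => / INR m) [(1 + n)%nat]) with (/ INR (S n) + 0).
    assert (Hpos : 0 < INR n) by (apply lt_0_INR; lia).
    rewrite S_INR.
    (* [ln (n / (n + 1)) <= n / (n + 1) - 1] gives [1 / (n + 1) <= ln (n + 1) - ln n] *)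
    pose proof (ln_le_sub_1 (INR n / (INR n + 1)) ltac:(apply Rdiv_lt_0_compat; lra)) as Hln.
    rewrite ln_div in Hln by lra.
    replace (INR n / (INR n + 1) - 1) with (- / (INR n + 1)) in Hln by (field; lra).
    lra.
Qed.

Lemma Int_part_nonneg x : 0 <= x -> (0 <= Int_part x)%Z.
Proof.
  intros Hx. destruct (base_Int_part x) as [_ Hgt].
  assert (Hlt : (-1 < Int_part x)%Z) by (apply lt_IZR; lra). lia.
Qed.

Lemma INR_Int_part_le x : 0 <= x -> INR (Z.to_nat (Int_part x)) <= x.
Proof.
  intros Hx. rewrite INR_IZR_INZ, Z2Nat.id by (apply Int_part_nonneg, Hx).
  apply base_Int_part.
Qed.

Lemma exp_succ_floor_ln_le y : 1 <= y -> exp (INR (S (Z.to_nat (Int_part (ln y))))) <= exp 1 * y.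
Proof.
  intros Hy. rewrite S_INR, exp_plus, Rmult_comm.
  apply Rmult_le_compat_l; [apply Rlt_le, exp_pos|].
  apply exp_le_of_le_ln; [lra | apply INR_Int_part_le, ln_nonneg, Hy].
Qed.

Definition trace_cost (St : setting) (tr : list (R * pt St)) : R :=
  sumR (fun c => real (lam St (fst c))) tr.

Definition within_budget (St : setting) (w : R) (tr : list (R * pt St)) : Prop :=
  Forall (fun c => is_finite (lam St (fst c))) tr /\ trace_cost St tr <= w.

Lemma total_cost_finite St tr :
  Forall (fun c => is_finite (lam St (fst c))) tr -> total_cost St tr = Finite (trace_cost St tr).
Proof.
  induction 1 as [|c tr Hc _ IH]; [reflexivity|].
  unfold total_cost, trace_cost in *; simpl. rewrite IH.
  apply is_finite_correct in Hc as [y ->]. reflexivity.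
Qed.

Lemma within_budget_nil St w : 0 <= w -> within_budget St w [].
Proof. intros Hw. split; [constructor | exact Hw]. Qed.

Lemma within_budget_app St w1 w2 l1 l2 :
  within_budget St w1 l1 -> within_budget St w2 l2 -> within_budget St (w1 + w2) (l1 ++ l2).
Proof.
  intros [F1 B1] [F2 B2]. split; [apply Forall_app; split; assumption|].
  unfold trace_cost in *. rewrite sumR_app. lra.
Qed.

Lemma within_budget_call St c x : valid St -> 1 <= c -> within_budget St c [(zc St c, x)].
Proof.
  intros (_ & _ & _ & _ & _ & Hlam & Hzc) Hc.
  destruct (Hzc c Hc) as [Hz Hle]. specialize (Hlam _ Hz).
  assert (Hfin : is_finite (lam St (zc St c))).
  { destruct (lam St (zc St c)); simpl in *; try contradiction; reflexivity. }
  split; [repeat constructor; exact Hfin|].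
  unfold trace_cost, sumR; simpl. rewrite <- Hfin in Hle. simpl in Hle. lra.
Qed.

Definition spends (St : setting) (st st' : state (pt St)) (w : R) : Prop :=
  exists extra, calls st' = calls st ++ extra /\ within_budget St w extra.

Lemma spends_refl St st w : 0 <= w -> spends St st st w.
Proof.
  intros Hw. exists []. rewrite app_nil_r. split; [reflexivity | apply within_budget_nil, Hw].
Qed.

Lemma spends_trans St st1 st2 st3 w1 w2 :
  spends St st1 st2 w1 -> spends St st2 st3 w2 -> spends St st1 st3 (w1 + w2).
Proof.
  intros (e1 & E1 & B1) (e2 & E2 & B2). exists (e1 ++ e2).
  rewrite E2, E1, app_assoc. split; [reflexivity | apply within_budget_app; assumption].
Qed.

Lemma spends_calls_eq St st0 st st' w :
  calls st0 = calls st -> spends St st0 st' w -> spends St st st' w.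
Proof. intros E0 (extra & E & B). exists extra. rewrite <- E0. split; assumption. Qed.

Lemma spends_fold_left {A} St (F : state (pt St) -> A -> state (pt St)) (w : A -> R) l st :
  (forall s a, spends St s (F s a) (w a)) -> spends St st (fold_left F l st) (sumR w l).
Proof.
  intros HF. revert st. induction l as [|a l IH]; intros st; simpl.
  - apply spends_refl. lra.
  - apply (spends_trans _ _ _ _ _ _ (HF st a) (IH (F st a))).
Qed.

Lemma spends_eval_cell St st h i u :
  valid St -> spends St st (eval_cell St st h i u) (exp (INR u)).
Proof.
  intros V. unfold eval_cell. destruct (Tflag st h i u).
  - apply spends_refl. apply Rlt_le, exp_pos.
  - exists [(zlev St u, rep St h i)]. split; [reflexivity|].
    apply within_budget_call; [exact V|].
    pose proof (exp_ineq1_le (INR u)). pose proof (pos_INR u). lra.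
Qed.

Definition open_cost (K n : nat) : R := INR K * (exp (INR n) - 1) / (exp 1 - 1).

Lemma open_cost_nonneg K n : 0 <= open_cost K n.
Proof.
  unfold open_cost. pose proof exp_1_gt_2. pose proof (pos_INR K).
  pose proof (exp_ineq1_le (INR n)). pose proof (pos_INR n).
  apply Rmult_le_pos; [apply Rmult_le_pos; lra|]. apply Rlt_le, Rinv_0_lt_compat. lra.
Qed.

Lemma spends_open_cell St st h i n :
  valid St -> spends St st (open_cell St st h i n) (open_cost (K St) n).
Proof.
  intros V. unfold open_cell.
  replace (open_cost (K St) n)
    with (sumR (fun p => exp (INR (snd p))) (list_prod (seq 0 (K St)) (seq 0 n))).
  - eapply spends_calls_eq; [|apply spends_fold_left; intros s p; apply spends_eval_cell, V].
    reflexivity.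
  - rewrite (sumR_list_prod_snd (fun u => exp (INR u))), length_seq, sumR_exp_seq.
    unfold open_cost, Rdiv. ring.
Qed.

Definition explore_cost (K : nat) (Lam : R) (p : nat * nat) : R :=
  open_cost K (S (explevel K Lam (fst p) (snd p))).

Lemma spends_explore_run St Lam st sched st' :
  valid St -> explore_run St Lam st sched st' ->
  spends St st st' (sumR (explore_cost (K St) Lam) sched).
Proof.
  intros V. induction 1 as [st|st h m rest st' st'' Hstep _ IH].
  - apply spends_refl. unfold sumR; simpl; lra.
  - change (sumR (explore_cost (K St) Lam) ((h, m) :: rest))
      with (explore_cost (K St) Lam (h, m) + sumR (explore_cost (K St) Lam) rest).
    apply spends_trans with st'; [|exact IH].
    destruct Hstep.
    + apply spends_open_cell, V.
    + apply spends_refl, open_cost_nonneg.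
Qed.

Lemma crossval_within_budget St Lam st js cv :
  valid St -> 1 <= IZR (Ltilde (K St) Lam) -> crossval St Lam st js cv ->
  within_budget St (INR (length js) * IZR (Ltilde (K St) Lam)) cv.
Proof.
  intros V Hl. induction 1 as [|j js h i rest _ _ _ _ IH].
  - apply within_budget_nil. simpl. lra.
  - replace (INR (length (j :: js)) * IZR (Ltilde (K St) Lam))
      with (IZR (Ltilde (K St) Lam) + INR (length js) * IZR (Ltilde (K St) Lam))
      by (simpl length; rewrite S_INR; ring).
    apply (within_budget_app St _ _ [_] rest); [apply within_budget_call|]; assumption.
Qed.

Definition kometo_cost_bound (K : nat) (Lam : R) : R :=
  open_cost K (nlevels K Lam) + sumR (explore_cost K Lam) (schedule K Lam)
  + INR (nlevels K Lam) * IZR (Ltilde K Lam).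

Lemma Ltilde_ge_1_of_nlevels_pos K Lam : (0 < nlevels K Lam)%nat -> (1 <= Ltilde K Lam)%Z.
Proof. unfold nlevels, jmax. destruct (Z.leb_spec 1 (Ltilde K Lam)); [auto | simpl; lia]. Qed.

Lemma kometo_run_within_budget St Lam tr :
  valid St -> kometo_run St Lam tr -> within_budget St (kometo_cost_bound (K St) Lam) tr.
Proof.
  intros V (st1 & st2 & cv & -> & Hexplore & Hcv & ->).
  destruct (spends_trans _ _ _ _ _ _ (spends_open_cell St (init_state _) 0 0 _ V)
              (spends_explore_run _ _ _ _ _ V Hexplore)) as (extra & E & Hextra).
  rewrite E. cbn [calls init_state app].
  apply within_budget_app; [exact Hextra|].
  destruct (Nat.eq_0_gt_0_cases (nlevels (K St) Lam)) as [H0 | Hpos].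
  - rewrite H0 in Hcv |- *. inversion Hcv. apply within_budget_nil. simpl. lra.
  - rewrite <- (length_seq (nlevels (K St) Lam) 0).
    apply (crossval_within_budget _ _ st2); [exact V | | exact Hcv].
    apply IZR_le, Ltilde_ge_1_of_nlevels_pos, Hpos.
Qed.

Definition open_rate (K : nat) : R := INR K * exp 1 / (exp 1 - 1).

Lemma open_rate_ge_K K : INR K <= open_rate K.
Proof.
  unfold open_rate. pose proof exp_1_gt_2. pose proof (pos_INR K).
  apply Rmult_le_reg_r with (exp 1 - 1); [lra|].
  unfold Rdiv. rewrite Rmult_assoc, Rinv_l by lra. nra.
Qed.

Lemma open_cost_le K n y : exp (INR n) <= exp 1 * y -> open_cost K n <= open_rate K * y.
Proof.
  intros Hn. unfold open_cost, open_rate, Rdiv.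
  pose proof exp_1_gt_2. pose proof (pos_INR K).
  assert (0 < / (exp 1 - 1)) by (apply Rinv_0_lt_compat; lra).
  replace (INR K * exp 1 * / (exp 1 - 1) * y) with (INR K * (exp 1 * y) * / (exp 1 - 1)) by ring.
  apply Rmult_le_compat_r; [lra|]. apply Rmult_le_compat_l; lra.
Qed.

Lemma nlevels_eq K Lam : (1 <= Ltilde K Lam)%Z ->
  nlevels K Lam = S (Z.to_nat (Int_part (ln (IZR (Ltilde K Lam))))).
Proof.
  intros Hl. unfold nlevels, jmax. rewrite (proj2 (Z.leb_le _ _) Hl).
  apply Z2Nat.inj_succ, Int_part_nonneg, ln_nonneg, (IZR_le 1), Hl.
Qed.

Lemma root_cost_le K Lam : (1 <= Ltilde K Lam)%Z ->
  open_cost K (nlevels K Lam) <= open_rate K * IZR (Ltilde K Lam).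
Proof.
  intros Hl. rewrite nlevels_eq by exact Hl.
  apply open_cost_le, exp_succ_floor_ln_le, (IZR_le 1), Hl.
Qed.

Lemma nlevels_le K Lam : (1 <= Ltilde K Lam)%Z ->
  INR (nlevels K Lam) <= 1 + ln (IZR (Ltilde K Lam)).
Proof.
  intros Hl. rewrite nlevels_eq, S_INR by exact Hl.
  pose proof (INR_Int_part_le _ (ln_nonneg _ (IZR_le 1 _ Hl))). lra.
Qed.

Lemma INR_div_nat_bounds (L h : nat) : (1 <= h)%nat ->
  0 <= INR L / INR h <= INR L.
Proof.
  intros Hh. assert (Hh1 : 1 <= INR h) by (apply (le_INR 1), Hh). pose proof (pos_INR L).
  split.
  - apply Rdiv_le_0_compat; lra.
  - apply Rmult_le_reg_r with (INR h); [lra|].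
    unfold Rdiv. rewrite Rmult_assoc, Rinv_l by lra. nra.
Qed.

Lemma in_schedule K Lam h m : In (h, m) (schedule K Lam) ->
  (1 <= h)%nat /\ (1 <= m)%nat /\ INR h * INR m <= INR (Z.to_nat (Ltilde K Lam)).
Proof.
  unfold schedule. set (L := Z.to_nat (Ltilde K Lam)). intros Hin.
  apply in_flat_map in Hin as (h' & Hh & Hm). apply in_map_iff in Hm as (m' & E & Hm).
  injection E as -> ->. apply in_seq in Hh, Hm.
  assert (Hdiv := INR_div_nat_bounds L h ltac:(lia)).
  assert (Hm' : INR m <= INR L / INR h).
  { apply Rle_trans with (INR (Z.to_nat (Int_part (INR L / INR h))));
      [apply le_INR; lia | apply INR_Int_part_le; lra]. }
  assert (Hh0 : 0 < INR h) by (apply lt_0_INR; lia).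
  split; [lia | split; [lia|]].
  replace (INR L) with (INR h * (INR L / INR h)) by (field; lra).
  apply Rmult_le_compat_l; lra.
Qed.

Lemma explore_cost_le K Lam h m : (1 <= Ltilde K Lam)%Z -> In (h, m) (schedule K Lam) ->
  explore_cost K Lam (h, m) <= open_rate K * IZR (Ltilde K Lam) * / (INR h * INR m).
Proof.
  intros Hl Hin. destruct (in_schedule _ _ _ _ Hin) as (Hh & Hm & Hhm).
  rewrite (INR_IZR_INZ (Z.to_nat _)), Z2Nat.id in Hhm by lia.
  assert (Hpos : 0 < INR h * INR m)
    by (apply Rmult_lt_0_compat; apply lt_0_INR; lia).
  rewrite Rmult_assoc. apply open_cost_le, exp_succ_floor_ln_le.
  apply Rmult_le_reg_r with (INR h * INR m); [exact Hpos|].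
  rewrite Rmult_assoc, Rinv_l by lra. lra.
Qed.

Lemma schedule_harmonic_le K Lam :
  sumR (fun p => / (INR (fst p) * INR (snd p))) (schedule K Lam)
  <= harmonic (Z.to_nat (Ltilde K Lam)) ^ 2.
Proof.
  unfold schedule. set (L := Z.to_nat (Ltilde K Lam)). rewrite sumR_flat_map.
  apply Rle_trans with (sumR (fun h => harmonic L * / INR h) (seq 1 L)).
  - apply sumR_le. intros h Hh. apply in_seq in Hh.
    rewrite sumR_map. simpl.
    set (N := Z.to_nat (Int_part (INR L / INR h))).
    apply Rle_trans with (sumR (fun m => / INR h * / INR m) (seq 1 N)).
    { apply sumR_le. intros m _. rewrite Rinv_mult. lra. }
    rewrite sumR_scal, Rmult_comm. fold (harmonic N).
    apply Rmult_le_compat_r; [apply Rlt_le, Rinv_0_lt_compat, lt_0_INR; lia|].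
    apply harmonic_le_mono, INR_le.
    apply (Rle_trans _ (INR L / INR h)); [apply INR_Int_part_le | ];
      apply INR_div_nat_bounds; lia.
  - rewrite sumR_scal. fold (harmonic L). simpl. lra.
Qed.

Lemma exploration_cost_le K Lam : (1 <= Ltilde K Lam)%Z ->
  sumR (explore_cost K Lam) (schedule K Lam)
  <= open_rate K * IZR (Ltilde K Lam) * (1 + ln (IZR (Ltilde K Lam))) ^ 2.
Proof.
  intros Hl. set (l := IZR (Ltilde K Lam)).
  assert (HL : INR (Z.to_nat (Ltilde K Lam)) = l)
    by (unfold l; rewrite INR_IZR_INZ, Z2Nat.id by lia; reflexivity).
  apply Rle_trans
    with (sumR (fun p => open_rate K * l * / (INR (fst p) * INR (snd p))) (schedule K Lam)).
  - apply sumR_le. intros [h m] Hin. apply explore_cost_le; assumption.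
  - rewrite sumR_scal. apply Rmult_le_compat_l.
    + pose proof (open_rate_ge_K K). pose proof (pos_INR K).
      assert (1 <= l) by apply (IZR_le 1), Hl.
      apply Rmult_le_pos; lra.
    + eapply Rle_trans; [apply schedule_harmonic_le|].
      apply pow_incr. split; [apply harmonic_nonneg|].
      rewrite <- HL. apply harmonic_le_1_ln. lia.
Qed.

Lemma Ltilde_nonneg K Lam : (1 <= K)%nat -> 1 <= Lam -> (0 <= Ltilde K Lam)%Z.
Proof.
  intros HK HLam. apply Int_part_nonneg.
  pose proof exp_1_gt_2. pose proof (ln_nonneg _ HLam). assert (1 <= INR K) by apply (le_INR 1), HK.
  apply Rdiv_le_0_compat; [apply Rmult_le_pos; lra|].
  apply Rmult_lt_0_compat; [| apply pow_lt; lra].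
  apply Rmult_lt_0_compat; lra.
Qed.

Lemma Ltilde_budget K Lam : (1 <= K)%nat -> 1 <= Lam ->
  2 * (ln Lam + 1) ^ 2 * (open_rate K * IZR (Ltilde K Lam)) <= Lam.
Proof.
  intros HK HLam. unfold Ltilde, open_rate.
  pose proof exp_1_gt_2. pose proof (ln_nonneg _ HLam). assert (1 <= INR K) by apply (le_INR 1), HK.
  set (D := 2 * INR K * exp 1 * (ln Lam + 1) ^ 2).
  assert (HD : 0 < D).
  { apply Rmult_lt_0_compat; [| apply pow_lt; lra]. apply Rmult_lt_0_compat; lra. }
  destruct (base_Int_part ((exp 1 - 1) * Lam / D)) as [Hfl _].
  replace (2 * (ln Lam + 1) ^ 2
           * (INR K * exp 1 / (exp 1 - 1) * IZR (Int_part ((exp 1 - 1) * Lam / D))))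
    with (D / (exp 1 - 1) * IZR (Int_part ((exp 1 - 1) * Lam / D))) by (unfold D; field; lra).
  replace Lam with (D / (exp 1 - 1) * ((exp 1 - 1) * Lam / D)) at 2 by (field; lra).
  apply Rmult_le_compat_l; [apply Rdiv_le_0_compat; lra | exact Hfl].
Qed.

Lemma budget_arith c l Lam a b : 2 <= c -> 0 <= l -> 2 <= a -> 0 <= b <= a ->
  2 * a ^ 2 * (c * l) <= Lam -> c * l + c * l * b ^ 2 + b * l <= Lam.
Proof.
  intros Hc Hl Ha Hb Hbud.
  assert (Hcl : 0 <= c * l) by (apply Rmult_le_pos; lra).
  assert (Hb2 : c * l * b ^ 2 <= c * l * a ^ 2)
    by (apply Rmult_le_compat_l; [exact Hcl | apply pow_incr; lra]).
  assert (Hbl : b * l <= a * l) by (apply Rmult_le_compat_r; lra).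
  assert (Hal : 2 * (a * l) <= c * (a * l))
    by (apply Rmult_le_compat_r; [apply Rmult_le_pos|]; lra).
  assert (Hquad : c * l * (1 + a / 2) <= c * l * a ^ 2) by (apply Rmult_le_compat_l; nra).
  lra.
Qed.

Lemma budget_large_Lam c l Lam : 2 <= c -> 1 <= l -> 1 <= Lam ->
  2 * (ln Lam + 1) ^ 2 * (c * l) <= Lam -> 1 <= ln Lam /\ l <= Lam.
Proof.
  intros Hc Hl HLam Hbud. pose proof (ln_nonneg _ HLam).
  assert (Hsq : 1 <= (ln Lam + 1) ^ 2) by (rewrite <- (pow1 2); apply pow_incr; lra).
  assert (Hac : 1 * 2 <= (ln Lam + 1) ^ 2 * c) by (apply Rmult_le_compat; lra).
  assert (H4 : 2 * 1 <= ((ln Lam + 1) ^ 2 * c) * l) by (apply Rmult_le_compat; lra).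
  assert (HlLam : l * 1 <= l * ((ln Lam + 1) ^ 2 * c)) by (apply Rmult_le_compat_l; lra).
  pose proof exp_le_3.
  pose proof (ln_le (exp 1) Lam (exp_pos 1) ltac:(lra)) as He. rewrite ln_exp in He.
  split; lra.
Qed.

Lemma kometo_cost_bound_le K Lam : (2 <= K)%nat -> 1 <= Lam -> kometo_cost_bound K Lam <= Lam.
Proof.
  intros HK HLam. unfold kometo_cost_bound.
  destruct (Z.eq_dec (Ltilde K Lam) 0) as [H0 | Hne].
  - unfold nlevels, jmax, schedule, open_cost. rewrite H0. simpl.
    rewrite exp_0. unfold sumR; simpl. unfold Rdiv. lra.
  - assert (Hl : (1 <= Ltilde K Lam)%Z) by (pose proof (Ltilde_nonneg K Lam ltac:(lia) HLam); lia).
    pose proof (root_cost_le K Lam Hl) as Hroot.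
    pose proof (exploration_cost_le K Lam Hl) as Hexplore.
    pose proof (nlevels_le K Lam Hl) as Hlevels.
    pose proof (Ltilde_budget K Lam ltac:(lia) HLam) as Hbud.
    set (l := IZR (Ltilde K Lam)) in *. set (c := open_rate K) in *.
    assert (Hl1 : 1 <= l) by apply (IZR_le 1), Hl.
    assert (Hc : 2 <= c).
    { pose proof (open_rate_ge_K K). pose proof (le_INR 2 K HK) as H2. simpl in H2. unfold c. lra. }
    destruct (budget_large_Lam c l Lam Hc Hl1 HLam Hbud) as [Hln HlLam].
    assert (Hb : 0 <= 1 + ln l <= ln Lam + 1).
    { pose proof (ln_nonneg _ Hl1). pose proof (ln_le l Lam ltac:(lra) ltac:(lra)). lra. }
    assert (Hcv : INR (nlevels K Lam) * l <= (1 + ln l) * l) by (apply Rmult_le_compat_r; lra).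
    pose proof (budget_arith c l Lam (ln Lam + 1) (1 + ln l) Hc ltac:(lra) ltac:(lra) Hb Hbud).
    lra.
Qed.

Theorem proposition2 :
  forall (St : setting) (Lam : R) (tr : list (R * pt St)),
    valid St -> 1 <= Lam ->
    kometo_run St Lam tr ->
    Rbar_le (total_cost St tr) (Finite Lam).
Proof.
  intros St Lam tr V HLam Hrun.
  destruct (kometo_run_within_budget St Lam tr V Hrun) as [Hfin Hcost].
  rewrite total_cost_finite by exact Hfin. simpl.
  pose proof (kometo_cost_bound_le (K St) Lam (proj1 V) HLam). lra.
Qed.
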